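(* Let $\mathbb K$ be an infinite field, $\mathcal N$ a vector space over $\mathbb K$, and $f:(\mathbb K^d)_{\mathrm{nc}}\to\mathcal N_{\mathrm{nc}}$ a nc function. Assume that for each $n$, $f(X_1,\dots,X_d)$ is a polynomial function of the $dn^2$ commuting variables $(X_i)_{jk}$ ($i=1,\dots,d$; $j,k=1,\dots,n$) with values in $\mathcal N^{n\times n}$, and that the degrees of these polynomial functions are bounded uniformly in $n$. Then $f$ is a nc polynomial with coefficients in $\mathcal N$: there exist $L\in\mathbb N$ and $p_w\in\mathcal N$ ($w\in\mathcal G_d$, $|w|\le L$) such that $f(X)=\sum_{|w|\le L}X^wp_w$ for all $n$ and all $X\in(\mathbb K^{n\times n})^d$.
   Context: $n\times n$ matrices over $\mathbb K^d$ are identified with $d$-tuples $X=(X_1,\dots,X_d)$ of $n\times n$ matrices over $\mathbb K$; $(\mathbb K^d)_{\mathrm{nc}}=\coprod_n(\mathbb K^{n\times n})^d$, $\mathcal N_{\mathrm{nc}}=\coprod_n\mathcal N^{n\times n}$. A nc function $f$ satisfies $f((\mathbb K^{n\times n})^d)\subseteq\mathcal N^{n\times n}$, $f(X\oplus Y)=f(X)\oplus f(Y)$ (direct sums taken componentwise, $X\oplus Y=\begin{bmatrix}X&0\\0&Y\end{bmatrix}$), and $f(SXS^{-1})=Sf(X)S^{-1}$ for invertible $S\in\mathbb K^{n\times n}$ (acting componentwise). $\mathcal G_d$ is the free monoid on letters $g_1,\dots,g_d$; for $w=g_{i_1}\cdots g_{i_\ell}$, $|w|=\ell$ and $X^w=X_{i_1}\cdots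 X_{i_\ell}$ ($X^\emptyset=I_n$); $X^wp_w\in\mathcal N^{n\times n}$ is the matrix with entries $(X^w)_{jk}p_w$. *)

From HB Require Import structures.
From mathcomp Require Import all_boot all_order all_algebra.
Set Implicit Arguments. Unset Strict Implicit. Unset Printing Implicit Defensive.
Import Order.TTheory GRing.Theory Num.Theory.
Local Open Scope ring_scope.

Section NC.
Variables (K : fieldType) (N : lmodType K) (d : nat).

Definition tup (n : nat) := 'I_d -> 'M[K]_n.

Definition lact m n p (A : 'M[K]_(m, n)) (M : 'M[N]_(n, p)) : 'M[N]_(m, p) :=
  \matrix_(i, j) \sum_(k < n) A i k *: M k j.
Definition ract m n p (M : 'M[N]_(m, n)) (A : 'M[K]_(n, p)) : 'M[N]_(m, p) :=
  \matrix_(i, j) \sum_(k < n) A k j *: M i k.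

Definition sc m n (a : K) (M : 'M[N]_(m, n)) : 'M[N]_(m, n) := map_mx (fun v => a *: v) M.

Definition nc_function (f : forall n, tup n -> 'M[N]_n) : Prop :=
  (forall m n (X : tup m) (Y : tup n),
      f (m + n)%N (fun i => block_mx (X i) 0 0 (Y i)) = block_mx (f m X) 0 0 (f n Y))
  /\ (forall n (X : tup n) (S : 'M[K]_n), S \in unitmx ->
      f n (fun i => S *m X i *m invmx S) = ract (lact S (f n X)) (invmx S)).

(* variables of the n-th level: (i, j, k) <-> (X_i)_{jk} *)
Definition var n := ('I_d * 'I_n * 'I_n)%type.

(* g : tup n -> 'M[N]_n is a polynomial function, of total degree <= D, in the
   d n^2 commuting variables (X_i)_{jk}, with coefficients in N^{n x n}:
   every monomial of degree <= D is an exponent vector e : var n -> 'I_D.+1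
   with total degree <= D. *)
Definition poly_fun_deg (D n : nat) (g : tup n -> 'M[N]_n) : Prop :=
  exists c : {ffun var n -> 'I_D.+1} -> 'M[N]_n,
    forall X : tup n,
      g X = \sum_(e : {ffun var n -> 'I_D.+1} | (\sum_v (e v : nat) <= D)%N)
              sc (\prod_(v : var n) (X v.1.1 v.1.2 v.2) ^+ e v) (c e).

Definition wordmx n (X : tup n) (w : seq 'I_d) : 'M[K]_n :=
  foldr (fun i A => X i *m A) 1%:M w.

(* X^w p : entries (X^w)_{jk} p *)
Definition mx_scale n (A : 'M[K]_n) (p : N) : 'M[N]_n := map_mx (fun a => a *: p) A.

End NC.

From HB Require Import structures.
From mathcomp Require Import all_boot all_order all_algebra.
From mathcomp Require Import zify ring.
From Stdlib Require Import FunctionalExtensionality.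
Set Implicit Arguments.
Unset Strict Implicit.
Import GRing.Theory.
Local Open Scope ring_scope.

(* Fix a depth [k > D], a level [n] and [Y].  Index a bigger level by the nodes
   [(u, a)], [u] a word of length at most [k], and let [tree t] act by [t Y_i]
   from [u] to [u g_i] and by [Y_i] on the leaves [|u| = k].  The column of
   identity blocks intertwines [Y] with [tree 1], so [f(Y)_ac] is the sum over
   [u] of the [(root a, (u, c))] entries of [f (tree 1)].  For an inner word [u]
   the path tuple of [u] intertwines into [tree 1], which turns that entry into
   [(Y^u)_ac p_u] with [p_u] the corner entry of [f] at the path tuple.  For a
   leaf the entry is a polynomial of degree at most [D] in [t] which, by
   conjugating with [diag (s ^ |u|)], is homogeneous of degree [k]; so it is 0. *)

Section Actions.
Variables (K : fieldType) (N : lmodType K).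

Lemma ractA m n p q (M : 'M[N]_(m, n)) (A : 'M[K]_(n, p)) (B : 'M[K]_(p, q)) :
  ract (ract M A) B = ract M (A *m B).
Proof.
apply/matrixP=> i j; rewrite !mxE.
under eq_bigr do rewrite mxE scaler_sumr.
rewrite exchange_big /=; apply: eq_bigr => l _; rewrite mxE scaler_suml.
by apply: eq_bigr => k _; rewrite scalerA mulrC.
Qed.

Lemma ract1 m n (M : 'M[N]_(m, n)) : ract M 1%:M = M.
Proof.
apply/matrixP=> i j; rewrite !mxE (bigD1 j) //= mxE eqxx scale1r big1 ?addr0 //.
by move=> k /negPf nkj; rewrite mxE nkj scale0r.
Qed.

Lemma lact_diag m n (e : 'rV[K]_m) (M : 'M[N]_(m, n)) :
  lact (diag_mx e) M = \matrix_(i, j) (e 0 i *: M i j).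
Proof.
apply/matrixP=> i j; rewrite !mxE (bigD1 i) //= mxE eqxx mulr1n big1 ?addr0 //.
by move=> k /negPf nki; rewrite mxE eq_sym nki mulr0n scale0r.
Qed.

Lemma ract_diag m n (M : 'M[N]_(m, n)) (e : 'rV[K]_n) :
  ract M (diag_mx e) = \matrix_(i, j) (e 0 j *: M i j).
Proof.
apply/matrixP=> i j; rewrite !mxE (bigD1 j) //= mxE eqxx mulr1n big1 ?addr0 //.
by move=> k /negPf nkj; rewrite mxE nkj mulr0n scale0r.
Qed.

End Actions.

Lemma sum_enum_rank (I : finType) (V : nmodType) (F : 'I_#|{: I}| -> V) :
  \sum_(r < #|{: I}|) F r = \sum_x F (enum_rank x).
Proof.
by rewrite (reindex enum_rank) //; exists enum_val => x _; rewrite ?enum_rankK ?enum_valK.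
Qed.

Section Deltas.
Variables (R : pzRingType) (I : finType) (x : I).

Lemma sum_eq_scaler (V : lmodType R) (F : I -> V) : \sum_y (y == x)%:R *: F y = F x.
Proof.
rewrite (bigD1 x) //= eqxx scale1r big1 ?addr0 // => y /negPf ->; exact: scale0r.
Qed.

Lemma sum_eq_mull (F : I -> R) : \sum_y (x == y)%:R * F y = F x.
Proof.
rewrite (bigD1 x) //= eqxx mul1r big1 ?addr0 // => y; rewrite eq_sym => /negPf ->.
exact: mul0r.
Qed.

Lemma sum_eq_mulr (F : I -> R) : \sum_y F y * (y == x)%:R = F x.
Proof.
rewrite (bigD1 x) //= eqxx mulr1 big1 ?addr0 // => y /negPf ->; exact: mulr0.
Qed.

Lemma sum_pair_eq_scaler (J : finType) (V : lmodType R) (F : J * I -> V) :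
  \sum_p (p.2 == x)%:R *: F p = \sum_j F (j, x).
Proof.
transitivity (\sum_j \sum_i (i == x)%:R *: F (j, i)).
  by rewrite pair_bigA; apply: eq_bigr => -[j i].
by apply: eq_bigr => j _; rewrite sum_eq_scaler.
Qed.

End Deltas.

Section NcFunction.
Variables (K : fieldType) (N : lmodType K) (d : nat).
Variable f : forall n, tup K d n -> 'M[N]_n.
Hypothesis f_nc : nc_function f.

(* [1 T; 0 1] commutes with [Y (+) X], hence with [f Y (+) f X]; compare the
   upper right blocks. *)
Lemma nc_intertwine m n (X : tup K d n) (Y : tup K d m) (T : 'M[K]_(m, n)) :
  (forall i, T *m X i = Y i *m T) -> lact T (f X) = ract (f Y) T.
Proof.
move=> TX; have [f_sum f_sim] := f_nc.
pose S : 'M[K]_(m + n) := block_mx 1%:M T 0 1%:M.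
pose Z i := block_mx (Y i) 0 0 (X i).
have SZ i : S *m Z i = Z i *m S.
  by rewrite !mulmx_block !mulmx0 !mul0mx !mulmx1 !mul1mx !addr0 !add0r TX.
have S_unit : S \in unitmx by rewrite unitmxE det_ublock !det1 mulr1 unitr1.
have fixZ : (fun i => S *m Z i *m invmx S) = Z.
  by apply: functional_extensionality => i; rewrite SZ mulmxK.
have fZS : ract (f Z) S = lact S (f Z).
  have := f_sim _ Z S S_unit; rewrite fixZ => fZ.
  by rewrite {1}fZ ractA mulVmx // ract1.
rewrite /Z f_sum in fZS; apply/matrixP=> i j.
move/matrixP: fZS => /(_ (lshift n i) (rshift m j)); rewrite !mxE !big_split_ord /= /S.
rewrite [X in _ + X = _ -> _]big1 => [|k _]; last first.
  by rewrite !(block_mxEul, block_mxEur, block_mxEdl, block_mxEdr) !mxE scaler0.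
rewrite [X in _ = X + _ -> _]big1 => [|k _]; last first.
  by rewrite !(block_mxEul, block_mxEur, block_mxEdl, block_mxEdr) !mxE scaler0.
rewrite addr0 add0r => E; apply/esym; apply: etrans (etrans _ E) _.
  by apply: eq_bigr => k _; rewrite block_mxEur block_mxEul.
by apply: eq_bigr => k _; rewrite block_mxEur block_mxEdr.
Qed.

Lemma nc_intertwine_fin (I : finType) m (X : tup K d m) (Z : tup K d #|{: I}|)
    (G : I -> 'I_m -> K) :
  (forall i x j, \sum_(j' < m) G x j' * X i j' j
                 = \sum_y Z i (enum_rank x) (enum_rank y) * G y j) ->
  forall x j, \sum_(j' < m) G x j' *: f X j' j
              = \sum_y G y j *: f Z (enum_rank x) (enum_rank y).
Proof.
move=> GX x j; pose T : 'M_(#|{: I}|, m) := \matrix_(r, j) G (enum_val r) j.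
have TX i : T *m X i = Z i *m T.
  apply/matrixP=> r j'; rewrite -(enum_valK r) !mxE sum_enum_rank.
  under eq_bigr do rewrite mxE enum_rankK.
  by rewrite GX; apply: eq_bigr => y _; rewrite mxE enum_rankK.
move/matrixP: (@nc_intertwine _ _ _ _ _ TX) => /(_ (enum_rank x) j).
rewrite !mxE sum_enum_rank.
under eq_bigr do rewrite mxE enum_rankK.
by move=> ->; apply: eq_bigr => y _; rewrite mxE enum_rankK.
Qed.

Lemma nc_rescale n (X : tup K d n) (r : 'I_n -> K) : (forall a, r a != 0) ->
  forall a b, f (fun i => \matrix_(a, b) (r a / r b * X i a b)) a b
              = r a / r b *: f X a b.
Proof.
move=> r_neq0 a b; pose S := diag_mx (\row_a r a); pose S' := diag_mx (\row_a (r a)^-1).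
have SS' : S *m S' = 1%:M.
  by rewrite mulmx_diag; apply/matrixP=> i j; rewrite !mxE mulfV.
have [S_unit _] := mulmx1_unit SS'.
have invS : invmx S = S' by rewrite -[invmx S]mulmx1 -SS' mulKmx.
have -> : (fun i => \matrix_(a, b) (r a / r b * X i a b)) = (fun i => S *m X i *m invmx S).
  apply: functional_extensionality => i; apply/matrixP=> a' b'.
  by rewrite invS mul_mx_diag mul_diag_mx !mxE mulrAC.
by rewrite (proj2 f_nc) // invS ract_diag lact_diag !mxE scalerA mulrC.
Qed.

End NcFunction.

Section InfiniteField.
Variable K : fieldType.
Hypothesis K_infinite : forall s : seq K, exists x : K, x \notin s.

Lemma exists_uniq_nonzero_seq m : exists s : seq K, [/\ uniq s, size s = m & 0 \notin s].
Proof.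
elim: m => [|m [s [s_uniq s_size s_neq0]]]; first by exists [::].
have [x] := K_infinite (0 :: s); rewrite inE negb_or => /andP[x_neq0 x_notin_s].
by exists (x :: s); rewrite /= inE negb_or eq_sym x_neq0 x_notin_s s_uniq s_size.
Qed.

(* Evaluating at m distinct nonzero points gives an invertible Vandermonde system. *)
Lemma coef_eq0_of_vanish (V : lmodType K) m (c : 'I_m -> V) :
  (forall u : K, u != 0 -> \sum_(i < m) u ^+ i *: c i = 0) -> forall i, c i = 0.
Proof.
move=> c_vanish l; have [s [s_uniq s_size s_neq0]] := exists_uniq_nonzero_seq m.
pose A : 'M[K]_m := (Vandermonde m (\row_j s`_j))^T.
have A_unit : A \in unitmx.
  rewrite unitmxE det_tr det_Vandermonde unitfE.
  apply/prodf_neq0 => i _; apply/prodf_neq0 => j ij.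
  rewrite !mxE subr_eq0 (nth_uniq 0) ?s_size //.
  by apply: contraTneq ij => /val_inj ->; rewrite ltnn.
have Ac j : \sum_(i < m) A j i *: c i = 0.
  rewrite -[RHS](c_vanish s`_j); last by apply: contraNneq s_neq0 => <-; rewrite mem_nth ?s_size.
  by apply: eq_bigr => i _; rewrite !mxE.
transitivity (\sum_(i < m) (invmx A *m A) l i *: c i).
  rewrite mulVmx // (bigD1 l) //= mxE eqxx scale1r big1 ?addr0 //.
  by move=> i /negPf il; rewrite mxE eq_sym il scale0r.
under eq_bigr do rewrite mxE scaler_suml.
rewrite exchange_big big1 //= => j _.
by under eq_bigr do rewrite -scalerA; rewrite -scaler_sumr Ac scaler0.
Qed.

Lemma homogeneous_poly_eq0 (V : lmodType K) D k (W : nat -> V) (h : K -> V) :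
  (D < k)%N -> (forall t, h t = \sum_(i < D.+1) t ^+ i *: W i) ->
  (forall z, z != 0 -> h z = z ^+ k *: h 1) -> h 1 = 0.
Proof.
move=> D_lt_k hW h_hom.
pose c (i : 'I_k.+1) := (if (i < D.+1)%N then W i else 0) - (i == k :> nat)%:R *: h 1.
suff /(_ ord_max) : forall i, c i = 0.
  by rewrite /c /= ltnS leqNgt D_lt_k eqxx scale1r sub0r => /eqP; rewrite oppr_eq0 => /eqP.
apply: coef_eq0_of_vanish => z z_neq0.
rewrite /c; under eq_bigr do rewrite scalerBr scalerA.
rewrite sumrB -scaler_suml [in X in _ - X]big_ord_recr /= eqxx mulr1.
rewrite [in X in _ - X]big1 ?add0r; last first.
  by move=> i _; rewrite ltn_eqF ?mulr0.
rewrite -h_hom // hW (big_ord_widen k.+1 (fun i => z ^+ i *: W i)) ?ltnS ?(ltnW D_lt_k) //.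
rewrite [X in _ - X]big_mkcond.
by apply/eqP; rewrite subr_eq0; apply/eqP/eq_bigr => i _; case: ifP; rewrite ?scaler0.
Qed.

End InfiniteField.

Section PolynomialFunctions.
Variables (K : fieldType) (N : lmodType K) (d : nat).

Lemma size_prod_exp_leq (I : finType) (F : I -> {poly K}) (e : I -> nat) :
  (forall v, size (F v) <= 2)%N -> (size (\prod_v F v ^+ e v)%R <= (\sum_v e v).+1)%N.
Proof.
move=> F_size; elim/big_rec2: _ => [|v p n _ p_size]; first by rewrite size_poly1.
apply: leq_trans (size_polyMleq _ _) _.
have := size_poly_exp_leq (F v) (e v); have := F_size v; nia.
Qed.

Lemma poly_fun_deg_line D n (g : tup K d n -> 'M[N]_n) (A B : tup K d n) :
  poly_fun_deg D g -> exists W : nat -> 'M[N]_n,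
    forall t a b, g (fun i => A i + t *: B i) a b = \sum_(i < D.+1) t ^+ i *: W i a b.
Proof.
move=> [c g_poly].
pose F (v : var d n) : {poly K} := (B v.1.1 v.1.2 v.2)%:P * 'X + (A v.1.1 v.1.2 v.2)%:P.
pose q (e : {ffun var d n -> 'I_D.+1}) := \prod_v F v ^+ e v.
exists (fun i => \matrix_(a, b)
  \sum_(e : {ffun var d n -> 'I_D.+1} | (\sum_v (e v : nat) <= D)%N) (q e)`_i *: c e a b).
move=> t a b; rewrite g_poly summxE.
have q_horner (e : {ffun var d n -> 'I_D.+1}) : (\sum_v (e v : nat) <= D)%N ->
    \prod_v ((A v.1.1 + t *: B v.1.1) v.1.2 v.2) ^+ e v = \sum_(i < D.+1) (q e)`_i * t ^+ i.
  move=> e_deg; rewrite -horner_coef_wide; last first.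
    apply: leq_trans (@size_prod_exp_leq _ F (fun v => e v) _) _; last by rewrite ltnS.
    by move=> v; rewrite size_MXaddC; case: ifP => // _; rewrite ltnS size_polyC_leq1.
  rewrite /q horner_prod; apply: eq_bigr => v _.
  by rewrite /F horner_exp hornerMXaddC hornerC !mxE mulrC addrC.
under eq_bigr => e e_deg do rewrite mxE q_horner // scaler_suml.
rewrite exchange_big /=; apply: eq_bigr => i _; rewrite mxE scaler_sumr.
by apply: eq_bigr => e _; rewrite scalerA mulrC.
Qed.

End PolynomialFunctions.

Section Words.
Variables (d k : nat).

Definition word_upto := {l : 'I_k.+1 & l.-tuple 'I_d}.
Definition word (x : word_upto) : seq 'I_d := tagged x.
Definition word_nil : word_upto := @Tagged _ ord0 (fun l : 'I_k.+1 => l.-tuple 'I_d) [tuple].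

Lemma word_nilE : word word_nil = [::]. Proof. by []. Qed.

Lemma size_word x : (size (word x) <= k)%N.
Proof. by case: x => l t; rewrite /word /= size_tuple -ltnS. Qed.

Lemma word_inj : injective word.
Proof.
case=> l t [l' t']; rewrite /word /= => eq_tt'; have eq_ll' : l = l'.
  by apply/val_inj; rewrite /= -(size_tuple t) -(size_tuple t') eq_tt'.
by subst l'; congr Tagged; apply/val_inj.
Qed.

Lemma word_surj w : (size w <= k)%N -> {x | word x = w}.
Proof. by rewrite -ltnS => w_size; exists (@Tagged _ (Ordinal w_size) _ (in_tuple w)). Qed.

Lemma big_word_upto (V : nmodType) (F : seq 'I_d -> V) :
  \sum_x F (word x) = \sum_(l < k.+1) \sum_(t : l.-tuple 'I_d) F t.
Proof. by rewrite sig_big_dep. Qed.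

Lemma sum_word_eq (R : pzSemiRingType) w :
  \sum_x (word x == w)%:R = (size w <= k)%:R :> R.
Proof.
have [/word_surj[x0 <-]|w_big] := boolP (size w <= k)%N.
  rewrite (bigD1 x0) //= eqxx big1 ?addr0 // => x.
  by rewrite (inj_eq word_inj) => /negPf ->.
rewrite big1 // => x _; case: eqP => // eq_w; move: w_big.
by rewrite -eq_w size_word.
Qed.

End Words.

Section TreeWeight.
Variables (K : fieldType) (d k : nat).
Local Notation word_upto := (word_upto d k).

(* The weighted tree of words of length at most [k]: letter [i] sends a word [u]
   to [rcons u i] with weight [t] and fixes the leaves, the words of length [k]. *)
Definition tree_weight (t : K) (i : 'I_d) (u v : word_upto) : K :=
  ((size (word u) == k) && (u == v))%:R + t * (word v == rcons (word u) i)%:R.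

Lemma sum_tree_weight1 i u : \sum_v tree_weight 1 i u v = 1.
Proof.
rewrite big_split /= -big_distrr /= mul1r sum_word_eq size_rcons.
have [u_leaf|u_inner] := eqVneq (size (word u)) k.
  rewrite u_leaf ltnn addr0 (bigD1 u) //= eqxx big1 ?addr0 // => v.
  by rewrite eq_sym => /negPf ->.
by rewrite big1 ?add0r // ltn_neqAle u_inner size_word.
Qed.

Lemma tree_weight_affine t i u v :
  tree_weight t i u v = tree_weight 0 i u v + t * (tree_weight 1 i u v - tree_weight 0 i u v).
Proof. by rewrite /tree_weight mul0r addr0 mul1r addrAC subrr add0r. Qed.

Lemma tree_weight_scale s t i u v : s != 0 ->
  s ^+ size (word u) / s ^+ size (word v) * tree_weight t i u v = tree_weight (t / s) i u v.
Proof.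
move=> s_neq0; have sX_neq0 n : s ^+ n != 0 by rewrite expf_neq0.
rewrite /tree_weight; have [<-|_] := eqVneq u v.
  have -> : (word u == rcons (word u) i) = false.
    by apply/negbTE; apply: contraTneq isT => /(congr1 size); rewrite size_rcons => /n_Sn.
  by rewrite divff // mul1r !mulr0.
rewrite andbF !add0r; case: eqP => [->|]; last by rewrite !mulr0.
by rewrite size_rcons exprS; field; rewrite s_neq0 sX_neq0.
Qed.

Lemma sum_tree_weight_eq i u w : (size w < k)%N ->
  \sum_v tree_weight 1 i u v * (word v == w)%:R = (rcons (word u) i == w)%:R.
Proof.
move=> w_small; rewrite /tree_weight.
under eq_bigr do rewrite mul1r mulrDl -!natrM !mulnb.
rewrite big_split /= big1 ?add0r => [|v _]; last first.
  case: eqP => [u_leaf|//]; case: eqP => [<-|//]; case: eqP => [eq_w|//].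
  by move: w_small; rewrite -eq_w u_leaf ltnn.
have [eq_w|neq_w] := eqVneq (rcons (word u) i) w.
  under eq_bigr do rewrite eq_w andbb.
  by rewrite sum_word_eq ltnW.
by rewrite big1 // => v _; case: eqP => // ->; rewrite (negPf neq_w).
Qed.

End TreeWeight.

Lemma rcons_eq_take (T : eqType) (u v : seq T) x j : (j < size v)%N ->
  (rcons u x == take j.+1 v) = (onth v j == Some x) && (u == take j v).
Proof.
by move=> j_lt; rewrite (take_nth x j_lt) eqseq_rcons andbC onthE (nth_map x) // eq_sym.
Qed.

Section Paths.
Variables (K : fieldType) (d : nat).

Definition path_tup (w : seq 'I_d) : tup K d (size w).+1 :=
  fun i => \matrix_(j, j') ((j' == j.+1 :> nat) && (onth w j == Some i))%:R.

Lemma wordmx_nil n (X : tup K d n) : wordmx X [::] = 1%:M.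
Proof. by []. Qed.

Lemma wordmx_drop n (X : tup K d n) w j i : onth w j = Some i ->
  wordmx X (drop j w) = X i *m wordmx X (drop j.+1 w).
Proof.
move=> wj; have j_lt : (j < size w)%N by rewrite -onthTE wj.
by rewrite (drop_nth i j_lt) (@onth_nth _ i i w j wj).
Qed.

Lemma sum_path_tup w i (F : nat -> K) (j : 'I_(size w).+1) :
  \sum_(j' < (size w).+1) F j' * path_tup w i j' j
  = ((0 < j)%N && (onth w j.-1 == Some i))%:R * F j.-1.
Proof.
case: j => [[|j] j_lt] /=.
  by rewrite mul0r big1 // => j' _; rewrite mxE /= mulr0.
rewrite (bigD1 (Ordinal (ltnW j_lt))) //= mxE /= eqxx /= big1 ?addr0 => [|j' neq_j]; last first.
  rewrite mxE /= eqSS (_ : (j == j') = false) ?mulr0 //.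
  by apply: contraNF neq_j => /eqP e; apply/eqP/val_inj.
by rewrite mulrC.
Qed.

End Paths.

Section Tree.
Variables (K : fieldType) (d k n : nat) (Y : tup K d n).
Local Notation node := (word_upto d k * 'I_n)%type.

Definition tree (t : K) : tup K d #|{: node}| := fun i => \matrix_(r, c)
  (tree_weight t i (enum_val r).1 (enum_val c).1 * Y i (enum_val r).2 (enum_val c).2).

Lemma treeE t i x y :
  tree t i (enum_rank x) (enum_rank y) = tree_weight t i x.1 y.1 * Y i x.2 y.2.
Proof. by rewrite mxE !enum_rankK. Qed.

Lemma tree_affine t : tree t = (fun i => tree 0 i + t *: (tree 1 i - tree 0 i)).
Proof.
apply: functional_extensionality => i; apply/matrixP=> r c.
by rewrite !mxE tree_weight_affine; ring.
Qed.

Lemma tree_rescale s t : s != 0 ->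
  (fun i => \matrix_(a, b) (s ^+ size (word (enum_val a).1) / s ^+ size (word (enum_val b).1)
                           * tree t i a b)) = tree (t / s).
Proof.
move=> s_neq0; apply: functional_extensionality => i; apply/matrixP=> r c.
by rewrite !mxE mulrA tree_weight_scale.
Qed.

Lemma sum_tree_row t i x (G : word_upto d k -> 'I_n -> K) :
  \sum_y tree t i (enum_rank x) (enum_rank y) * G y.1 y.2
  = \sum_u tree_weight t i x.1 u * \sum_b Y i x.2 b * G u b.
Proof.
symmetry; under eq_bigr do rewrite big_distrr /=.
by rewrite pair_bigA; apply: eq_bigr => -[u b] _; rewrite treeE mulrA.
Qed.

End Tree.

Section Expansion.
Variables (K : fieldType) (N : lmodType K) (d : nat).
Variable f : forall n, tup K d n -> 'M[N]_n.
Hypothesis f_nc : nc_function f.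
Hypothesis K_infinite : forall s : seq K, exists x : K, x \notin s.

(* For [f X = \sum_w X^w p_w] this entry is exactly [p_w]. *)
Definition nc_coef (w : seq 'I_d) : N := f (path_tup K w) ord0 ord_max.

Variables (k n : nat) (Y : tup K d n).
Local Notation node := (word_upto d k * 'I_n)%type.
Local Notation root a := (enum_rank ((word_nil d k, a) : node)).

Lemma nc_tree_root a c : f Y a c = \sum_u f (tree k Y 1) (root a) (enum_rank ((u, c) : node)).
Proof.
have Y_tree i x j : \sum_(j' < n) (x.2 == j')%:R * Y i j' j
                   = \sum_y tree k Y 1 i (enum_rank x) (enum_rank y) * (y.2 == j)%:R.
  rewrite sum_eq_mull (@sum_tree_row _ _ _ _ Y 1 i x (fun _ b => (b == j)%:R)).
  under eq_bigr do rewrite sum_eq_mulr.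
  by rewrite -big_distrl /= sum_tree_weight1 mul1r.
have := nc_intertwine_fin f_nc Y_tree (word_nil d k, a) c.
by under eq_bigr do rewrite eq_sym; rewrite sum_eq_scaler sum_pair_eq_scaler.
Qed.

Lemma nc_tree_inner u a c : (size (word u) < k)%N ->
  f (tree k Y 1) (root a) (enum_rank ((u, c) : node))
  = wordmx Y (word u) a c *: nc_coef (word u).
Proof.
set v := word u => v_small.
(* Intertwiner from [path_tup v] to [tree 1]: vertex [j] of the path goes to
   the prefix [take j v], weighted by the matrix of the suffix [drop j v]. *)
pose G (u : word_upto d k) (b : 'I_n) (j : nat) :=
  (word u == take j v)%:R * wordmx Y (drop j v) b c.
have path_tree i x (j : 'I_(size v).+1) :
    \sum_(j' < (size v).+1) G x.1 x.2 j' * path_tup K v i j' j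
    = \sum_y tree k Y 1 i (enum_rank x) (enum_rank y) * G y.1 y.2 j.
  rewrite sum_path_tup (@sum_tree_row _ _ _ _ Y 1 i x (fun u b => G u b j)).
  under eq_bigr do under eq_bigr do rewrite mulrCA.
  under eq_bigr do rewrite -big_distrr /= mulrA.
  rewrite -big_distrl /= sum_tree_weight_eq; last first.
    by rewrite size_take; case: ifP => // /ltn_trans; apply.
  case: j => [[|j] j_lt] /=.
    by rewrite take0 mul0r (_ : rcons _ _ == _ = false) ?mul0r //; case: (word x.1).
  rewrite rcons_eq_take //; have [vj|] := eqVneq (onth v j) (Some i); last by rewrite !mul0r.
  by rewrite /G (wordmx_drop Y vj) mxE !mul1r.
have nil_take (j : 'I_(size v).+1) : (word (word_nil d k) == take j v) = (j == ord0).
  rewrite word_nilE eq_sym -size_eq0 size_takel; last by rewrite -ltnS ltn_ord.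
  by apply/eqP/eqP => [j_eq0|->]; first exact: val_inj.
have := nc_intertwine_fin f_nc (G := fun y j => G y.1 y.2 j) path_tree (word_nil d k, a) ord_max.
under eq_bigr do rewrite /G nil_take -scalerA.
rewrite sum_eq_scaler drop0 => ->.
under eq_bigr do rewrite /G take_size drop_size wordmx_nil mxE mulrC -scalerA.
rewrite sum_pair_eq_scaler.
under eq_bigr do rewrite (inj_eq (@word_inj _ _)).
by rewrite sum_eq_scaler.
Qed.

Lemma nc_tree_leaf D u a c :
    poly_fun_deg D (@f #|{: node}|) -> (D < k)%N -> size (word u) = k ->
  f (tree k Y 1) (root a) (enum_rank ((u, c) : node)) = 0.
Proof.
move=> f_deg D_lt_k u_leaf.
pose h t := f (tree k Y t) (root a) (enum_rank ((u, c) : node)).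
have [W hW] := poly_fun_deg_line (tree k Y 0) (fun i => tree k Y 1 i - tree k Y 0 i) f_deg.
apply: (homogeneous_poly_eq0 K_infinite (h := h) D_lt_k
         (W := fun i => W i (root a) (enum_rank ((u, c) : node)))) => [t|z z_neq0].
  by rewrite /h tree_affine hW.
pose r (q : 'I_#|{: node}|) := z^-1 ^+ size (word (enum_val q).1).
have r_neq0 q : r q != 0 by rewrite expf_neq0 ?invr_neq0.
have := nc_rescale f_nc (tree k Y 1) r_neq0 (root a) (enum_rank ((u, c) : node)).
rewrite /r (tree_rescale k Y 1 (invr_neq0 z_neq0)) div1r invrK !enum_rankK word_nilE u_leaf.
by rewrite expr0 div1r exprVn invrK.
Qed.

Lemma nc_expansion D : (forall m, poly_fun_deg D (@f m)) -> (D < k)%N ->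
  f Y = \sum_(l < k) \sum_(w : l.-tuple 'I_d) mx_scale (wordmx Y w) (nc_coef w).
Proof.
move=> f_deg D_lt_k; apply/matrixP=> a c.
pose F w := if (size w < k)%N then wordmx Y w a c *: nc_coef w else 0.
transitivity (\sum_(u : word_upto d k) F (word u)).
  rewrite nc_tree_root; apply: eq_bigr => u _; rewrite /F.
  case: ifP => [u_inner|u_leaf]; first exact: nc_tree_inner.
  apply: (@nc_tree_leaf D u a c (f_deg _) D_lt_k).
  by apply/eqP; rewrite eqn_leq size_word leqNgt u_leaf.
rewrite (big_word_upto k F) big_ord_recr /= [X in _ + X = _]big1 ?addr0 => [|t _]; last first.
  by rewrite /F size_tuple ltnn.
rewrite summxE; apply: eq_bigr => l _; rewrite summxE; apply: eq_bigr => t _.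
by rewrite /F size_tuple ltn_ord mxE.
Qed.

End Expansion.

Theorem theorem6p1 (K : fieldType) (N : lmodType K) (d : nat)
    (f : forall n, tup K d n -> 'M[N]_n) :
  (forall s : seq K, exists x : K, x \notin s) ->
  nc_function f ->
  (exists D : nat, forall n, poly_fun_deg D (f n)) ->
  exists (L : nat) (p : seq 'I_d -> N),
    forall n (X : tup K d n),
      f n X = \sum_(l < L.+1) \sum_(w : l.-tuple 'I_d) mx_scale (wordmx X w) (p w).
Proof.
move=> K_infinite f_nc [D f_deg]; exists D, (nc_coef f) => n X.
exact: (nc_expansion f_nc K_infinite X f_deg (ltnSn D)).
Qed.
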